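(* Let $M$ be a matroid on the edge set $E$ of a graph $G=(V,E)$, with rank function $r$. Suppose every circuit $C$ of $M$ induces a $2$-connected subgraph $(V(C),C)$ of $G$. Let $X\subseteq E$ be a connected set of $M$. Then $$\sum_{v\in V(X)}\min\{d_B(v): B\text{ a base of }X\}\le 2(r(X)+1)-|V(X)|.$$
   Context: $V(X)$ is the set of vertices incident with edges of $X$. $d_B(v)$ is the number of edges of $B$ incident with $v$. A base of $X$ is a maximal independent subset of $X$. A set $X$ is connected in $M$ if $M|_X$ is connected, i.e. every two distinct elements of $X$ lie in a common circuit contained in $X$. *)

From mathcomp Require Import all_boot.
Set Implicit Arguments. Unset Strict Implicit. Unset Printing Implicit Defensive.

Record matroid (E : finType) := Matroid {
  indep : {set E} -> bool;
  indep0 : indep set0;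
  indep_sub : forall A B : {set E}, A \subset B -> indep B -> indep A;
  indep_aug : forall A B : {set E}, indep A -> indep B -> #|A| < #|B| ->
                exists2 e, e \in B :\: A & indep (e |: A)
}.

Section MatroidDefs.
Variables (E : finType) (M : matroid E).

Definition rank (X : {set E}) : nat :=
  \max_(B : {set E} | indep M B && (B \subset X)) #|B|.

Definition is_base (X B : {set E}) : bool :=
  [&& B \subset X, indep M B &
      [forall B' : {set E},
         [&& B \subset B', B' \subset X & indep M B'] ==> (B' == B)]].

Definition is_circuit (C : {set E}) : Prop :=
  ~~ indep M C /\ forall e, e \in C -> indep M (C :\ e).

(* X is connected in M: M|X is connected, i.e. every two distinct elements
   of X lie in a common circuit contained in X *)
Definition mconnected (X : {set E}) : Prop :=
  forall e f, e \in X -> f \in X -> e != f ->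
    exists C : {set E}, [/\ is_circuit C, C \subset X, e \in C & f \in C].
End MatroidDefs.

(* Graphs: vertex set V, edge set E, each edge e has endpoints src e, dst e
   (parallel edges allowed, loops excluded by a hypothesis in the theorem). *)
Section GraphDefs.
Variables (V E : finType) (src dst : E -> V).

Definition ends (e : E) : {set V} := [set src e; dst e].

Definition verts (X : {set E}) : {set V} := \bigcup_(e in X) ends e.

Definition deg (B : {set E}) (v : V) : nat := #|[set e in B | v \in ends e]|.

Definition adjF (F : {set E}) : rel V :=
  fun x y => [exists e in F, (x \in ends e) && (y \in ends e)].

(* the graph (W, F) is connected (assumes F has its endpoints in W) *)
Definition gconnected (W : {set V}) (F : {set E}) : Prop :=
  forall x y, x \in W -> y \in W -> connect (adjF F) x y.

Definition two_connected (W : {set V}) (F : {set E}) : Prop :=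
  gconnected W F /\
  forall v, v \in W -> 3 <= #|W| ->
    gconnected (W :\ v) [set e in F | v \notin ends e].
End GraphDefs.

(* Grow a subset Y of X, starting from a single edge, by ears: circuits C ⊆ X
   meeting both Y and X ∖ Y with |C ∖ Y| minimal.  Minimality makes
   B ∪ (C ∖ Y − e) a base of Y ∪ C for every base B of Y and every e ∈ C ∖ Y,
   so the rank grows by |C ∖ Y| − 1, while at each vertex v the least base
   degree grows by at most d_{C∖Y}(v) − [v ∈ V(C ∖ Y)].  By the handshake
   identity the left-hand side thus grows by at most
   2|C ∖ Y| − |V(Y) ∩ V(C ∖ Y)|, and 2-connectivity of C forces
   |V(Y) ∩ V(C ∖ Y)| ≥ 2, which is exactly the growth the right-hand side
   allows.  Connectivity of X provides ears until Y = X. *)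

From mathcomp Require Import all_boot order zify.
Set Implicit Arguments. Unset Strict Implicit. Unset Printing Implicit Defensive.

Lemma sum_mem_card (T : finType) (A : {set T}) : \sum_x (x \in A : nat) = #|A|.
Proof. by rewrite -sum1_card [RHS]big_mkcond; apply: eq_bigr => x _; case: (x \in A). Qed.

Lemma cardsU_subsetC (T : finType) (A B Y : {set T}) :
  A \subset Y -> B \subset ~: Y -> #|A :|: B| = #|A| + #|B|.
Proof.
move=> sAY sBY; apply/eqP; rewrite (leq_card_setU A B).2 disjoint_sym disjoints_subset.
by apply: subset_trans sBY _; rewrite setCS.
Qed.

Section MatroidFacts.
Variables (E : finType) (M : matroid E).
Implicit Types (A B C I J Y : {set E}) (e x : E).

Lemma indep_augment A I : indep M A -> indep M I ->
  exists J, [/\ indep M J, A \subset J, J \subset A :|: I & #|I| <= #|J|].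
Proof.
move=> iA iI; pose P J := [&& indep M J, A \subset J & J \subset A :|: I].
have PA : P A by rewrite /P iA subxx subsetUl.
have [J /and3P [iJ sAJ sJ] maxJ] := arg_maxnP (fun J => #|J|) PA.
exists J; split=> //; rewrite leqNgt; apply/negP => ltJI.
have [x /setDP [xI xJ] ixJ] := indep_aug iJ iI ltJI.
have PxJ : P (x |: J).
  by rewrite /P ixJ (subset_trans sAJ (subsetUr _ _)) subUset sub1set inE xI sJ orbT.
by have /= := maxJ _ PxJ; rewrite cardsU1 xJ add1n ltnn.
Qed.

Lemma is_baseP Y B :
  reflect [/\ B \subset Y, indep M B &
             forall x, x \in Y -> x \notin B -> ~~ indep M (x |: B)]
          (is_base M Y B).
Proof.
apply: (iffP and3P) => [[sBY iB /forallP maxB]|[sBY iB maxB]]; split=> //.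
  move=> x xY xB; apply/negP => ixB; have := maxB (x |: B).
  rewrite subsetUr subUset sub1set xY sBY ixB => /eqP eqB.
  by rewrite -eqB setU11 in xB.
apply/forallP => B'; apply/implyP => /and3P [sBB' sB'Y iB'].
rewrite eqEsubset sBB' andbT; apply/subsetP => x xB'; apply/contraT => xB.
case/negP: (maxB x (subsetP sB'Y x xB') xB); apply: indep_sub iB'.
by rewrite subUset sub1set xB' sBB'.
Qed.

Lemma indep_base_extend Y A :
  indep M A -> A \subset Y -> exists2 B, is_base M Y B & A \subset B.
Proof.
move=> iA sAY; pose P B := [&& indep M B, A \subset B & B \subset Y].
have PA : P A by rewrite /P iA subxx sAY.
have [B /and3P [iB sAB sBY] maxB] := arg_maxnP (fun B => #|B|) PA.
exists B => //; apply/is_baseP; split=> // x xY xB; apply/negP => ixB.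
have PxB : P (x |: B).
  by rewrite /P ixB (subset_trans sAB (subsetUr _ _)) subUset sub1set xY sBY.
by have /= := maxB _ PxB; rewrite cardsU1 xB add1n ltnn.
Qed.

Lemma base_exists Y : exists B, is_base M Y B.
Proof. by have [B bB _] := indep_base_extend (indep0 M) (sub0set Y); exists B. Qed.

Lemma base_card_max Y B A :
  is_base M Y B -> indep M A -> A \subset Y -> #|A| <= #|B|.
Proof.
move=> /is_baseP [sBY iB maxB] iA sAY; rewrite leqNgt; apply/negP => ltBA.
have [x /setDP [xA xB] ixB] := indep_aug iB iA ltBA.
by case/negP: (maxB x (subsetP sAY x xA) xB).
Qed.

Lemma rank_base Y B : is_base M Y B -> rank M Y = #|B|.
Proof.
move=> bB; apply/eqP; rewrite eqn_leq; apply/andP; split.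
  by apply/bigmax_leqP => A /andP [iA sAY]; apply: base_card_max bB iA sAY.
case/is_baseP: bB => sBY iB _.
by apply: (leq_bigmax_cond (F := fun B : {set E} => #|B|)); rewrite iB sBY.
Qed.

Definition circuitb C := ~~ indep M C && [forall e in C, indep M (C :\ e)].

Lemma circuitP C : reflect (is_circuit M C) (circuitb C).
Proof. by apply: (iffP andP) => [] [dC /forall_inP iC]; split. Qed.

Lemma dep_sub_circuit A : ~~ indep M A -> exists2 C, is_circuit M C & C \subset A.
Proof.
move=> dA; pose P C := ~~ indep M C && (C \subset A).
have PA : P A by rewrite /P dA subxx.
have [C /andP [dC sCA] minC] := arg_minnP (fun C => #|C|) PA.
exists C => //; split=> // e eC; apply/contraT => deC.
have := minC (C :\ e); rewrite /P deC (subset_trans (subsetDl _ _) sCA).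
by rewrite (cardsD1 e C) eC add1n ltnn => /(_ isT).
Qed.

Lemma base_setU_circuit_dep Y B C e :
  is_base M Y B -> is_circuit M C -> e \in C -> e \notin Y ->
  ~~ indep M (B :|: (C :\: Y)).
Proof.
move=> bB [dC iCe] eC eY; apply/negP => iBC.
have sBY : B \subset Y by case/is_baseP: bB.
have [J [iJ sCJ sJ leJ]] := indep_augment (iCe e eC) iBC.
have eJ : e \notin J.
  apply: contra dC => eJ; apply: indep_sub iJ; apply/subsetP => x xC.
  by case: (eqVneq x e) => [->//|xe]; apply: (subsetP sCJ); rewrite !inE xe.
have JY : #|J :&: Y| <= #|B|.
  exact: base_card_max bB (indep_sub (subsetIl _ _) iJ) (subsetIr _ _).
have JnY : #|J :\: Y| <= #|(C :\: Y) :\ e|.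
  apply/subset_leq_card/subsetP => x /setDP [xJ xY].
  have xe : x != e by apply: contraNneq eJ => <-.
  move: (subsetP sJ x xJ); rewrite !inE xe xY /= => /or3P [] //.
  by move/(subsetP sBY); rewrite (negbTE xY).
have eD : e \in C :\: Y by rewrite inE eY eC.
have sDY : C :\: Y \subset ~: Y by rewrite setDE subsetIr.
rewrite -(cardsID Y J) in leJ; have := leq_trans leJ (leq_add JY JnY).
by rewrite (cardsU_subsetC sBY sDY) (cardsD1 e (C :\: Y)) eD add1n addnS ltnn.
Qed.

Definition ear Y C := [&& circuitb C, ~~ [disjoint C & Y] & ~~ (C \subset Y)].

Lemma ear_exists X Y e f :
  mconnected M X -> Y \subset X -> e \in Y -> f \in X -> f \notin Y ->
  exists2 C, ear Y C && (C \subset X) &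
    forall C', ear Y C' -> C' \subset X -> #|C :\: Y| <= #|C' :\: Y|.
Proof.
move=> HX sYX eY fX fY.
have ef : e != f by apply: contraNneq fY => <-.
have [C0 [cC0 sC0X eC0 fC0]] := HX e f (subsetP sYX e eY) fX ef.
pose P C := ear Y C && (C \subset X).
have PC0 : P C0.
  rewrite /P /ear sC0X andbT; apply/and3P; split; first exact/circuitP.
    by apply/negP => /disjointFr /(_ eC0); rewrite eY.
  by apply/subsetPn; exists f.
have [C PC minC] := arg_minnP (fun C => #|C :\: Y|) PC0.
by exists C => // C' earC' sC'X; apply: minC; rewrite /P earC'.
Qed.

Section MinimalEar.
Variables (Y C : {set E}).
Hypothesis circuitC : is_circuit M C.
Hypothesis minC :
  forall C', ear Y C' -> C' \subset Y :|: C -> #|C :\: Y| <= #|C' :\: Y|.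

Lemma min_ear_indep B e :
  is_base M Y B -> e \in C :\: Y -> indep M (B :|: (C :\: Y) :\ e).
Proof.
case: circuitC => _ iCe /is_baseP [sBY iB _] eD; have [eC eY] := setDP eD.
apply/contraT => dep; have [C' cC' sC'] := dep_sub_circuit dep; have [dC' _] := cC'.
have sC'D : C' :\: Y \subset (C :\: Y) :\ e.
  apply/subsetP => x /setDP [xC' xY]; move: (subsetP sC' x xC'); rewrite inE.
  by case/orP => // /(subsetP sBY); rewrite (negbTE xY).
have meetY : ~~ [disjoint C' & Y].
  apply/negP => /setDidPl eqC'; case/negP: dC'; apply: (indep_sub _ (iCe e eC)).
  by rewrite -eqC'; apply: subset_trans sC'D _; apply: setSD; apply: subsetDl.
have notsubY : ~~ (C' \subset Y).
  apply/negP => sC'Y; case/negP: dC'; apply: indep_sub iB.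
  apply/subsetP => x xC'; move: (subsetP sC' x xC'); rewrite !inE.
  by rewrite (subsetP sC'Y x xC') /= andbF orbF.
have earC' : ear Y C'.
  by rewrite /ear meetY notsubY !andbT; apply/circuitP.
have sC'YC : C' \subset Y :|: C.
  apply: subset_trans sC' _; apply: setUSS sBY _.
  exact: subset_trans (subsetDl _ _) (subsetDl _ _).
have := leq_trans (minC earC' sC'YC) (subset_leq_card sC'D).
by rewrite (cardsD1 e (C :\: Y)) eD add1n ltnn.
Qed.

Lemma min_ear_base B e :
  is_base M Y B -> e \in C :\: Y -> is_base M (Y :|: C) (B :|: (C :\: Y) :\ e).
Proof.
move=> bB eD; have [eC eY] := setDP eD; have [sBY _ maxB] := is_baseP Y B bB.
apply/is_baseP; split.
- apply: setUSS sBY _; exact: subset_trans (subsetDl _ _) (subsetDl _ _).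
- exact: min_ear_indep.
move=> x xYC; rewrite in_setU negb_or => /andP [xB xDe].
case: (boolP (x \in Y)) => xY.
  by apply: contra (maxB x xY xB); apply: indep_sub; apply/setUS/subsetUl.
have -> : x = e.
  move: xDe xYC; rewrite !inE (negbTE xY) /=.
  by case/nandP => [/negPn/eqP|/negP].
by rewrite setUCA setD1K //; exact: base_setU_circuit_dep bB circuitC eC eY.
Qed.

End MinimalEar.
End MatroidFacts.

Section GraphFacts.
Variables (V E : finType) (src dst : E -> V).
Hypothesis src_neq_dst : forall e, src e != dst e.
Local Notation ends := (ends src dst).
Local Notation verts := (verts src dst).
Local Notation deg := (deg src dst).
Local Notation adjF := (adjF src dst).
Implicit Types (A B C D F Y : {set E}) (e g : E) (v : V).

Lemma card_ends e : #|ends e| = 2.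
Proof. by rewrite cards2 src_neq_dst. Qed.

Lemma ends_sub_verts A e : e \in A -> ends e \subset verts A.
Proof. exact: bigcup_sup. Qed.

Lemma verts_subset A B : A \subset B -> verts A \subset verts B.
Proof.
move=> sAB; apply/subsetP => v /bigcupP [e eA ve].
exact: subsetP (ends_sub_verts (subsetP sAB e eA)) v ve.
Qed.

Lemma deg_eq0 B v : v \notin verts B -> deg B v = 0.
Proof.
move=> vB; apply/eqP; rewrite cards_eq0; apply/eqP/setP => e; rewrite in_set0 in_set.
by apply/negP => /andP [eB ve]; case/negP: vB; apply/bigcupP; exists e.
Qed.

Lemma deg_setU_le A B v : deg (A :|: B) v <= deg A v + deg B v.
Proof.
apply: leq_trans (leq_card_setU _ _); apply/subset_leq_card/subsetP => e.
by rewrite !inE => /andP [/orP [] -> ->]; rewrite ?orbT.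
Qed.

Lemma deg_setD1 D e v : e \in D -> deg D v = (v \in ends e) + deg (D :\ e) v.
Proof.
move=> eD; rewrite /deg (cardsD1 e) !inE eD /=; congr (_ + _).
by apply: eq_card => x; rewrite !inE andbA.
Qed.

Lemma sum_deg B : \sum_v deg B v = 2 * #|B|.
Proof.
have degE v : deg B v = \sum_(e in B) (v \in ends e : nat).
  rewrite /deg -sum1_card big_mkcond [RHS]big_mkcond; apply: eq_bigr => e _.
  by rewrite inE; case: (e \in B).
under eq_bigr do rewrite degE.
rewrite exchange_big /= -sum1_card big_distrr /=; apply: eq_bigr => e _.
by rewrite sum_mem_card card_ends muln1.
Qed.

Lemma attach_closed C Y F :
  F \subset C ->
  (forall g x, g \in F -> x \in ends g -> x \notin verts Y :&: verts (C :\: Y)) ->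
  closed (adjF F) (verts Y).
Proof.
move=> sFC FW x y /existsP [g /andP [gF /andP [xg yg]]].
have [gY|gnY] := boolP (g \in Y).
  by rewrite (subsetP (ends_sub_verts gY) x xg) (subsetP (ends_sub_verts gY) y yg).
have gD : g \in C :\: Y by rewrite inE gnY (subsetP sFC g gF).
have outY z : z \in ends g -> (z \in verts Y) = false.
  move=> zg; apply: contraNF (FW g z gF zg) => zY.
  by rewrite inE zY (subsetP (ends_sub_verts gD)).
by rewrite !outY.
Qed.

Lemma two_connected_avoid (W S : {set V}) F a b :
  two_connected src dst W F -> #|S| <= 1 -> S \subset W ->
  a \in W -> b \in W -> a \notin S -> b \notin S -> a != b ->
  exists F', [/\ F' \subset F,
    forall g x, g \in F' -> x \in ends g -> x \notin S & connect (adjF F') a b].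
Proof.
move=> [connW connWv] S1 sSW aW bW aS bS ab.
move: S1; rewrite leq_eqVlt ltnS leqn0 cards_eq0.
case/orP => [/cards1P [w S_w]|/eqP S0]; last first.
  by exists F; split=> // [g x _ _|]; [rewrite S0 inE | exact: connW].
have wW : w \in W by rewrite (subsetP sSW) // S_w set11.
have aw : a != w by move: aS; rewrite S_w inE.
have bw : b != w by move: bS; rewrite S_w inE.
have W3 : 3 <= #|W|.
  have ab2 : #|[set a; b]| = 2 by rewrite cards2 ab.
  rewrite (cardsD1 w) wW add1n ltnS -ab2; apply/subset_leq_card/subsetP => x.
  by rewrite !inE => /orP [] /eqP ->; rewrite ?aw ?bw ?aW ?bW.
exists [set g in F | w \notin ends g]; split.
- by apply/subsetP => g; rewrite inE => /andP [].
- move=> g x; rewrite inE S_w inE => /andP [_ wg] xg.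
  by apply: contraNneq wg => <-.
- by apply: connWv => //; rewrite !inE ?aw ?bw.
Qed.

Lemma two_connected_attach C Y f d :
  two_connected src dst (verts C) C -> f \in C -> f \in Y -> d \in C -> d \notin Y ->
  2 <= #|verts Y :&: verts (C :\: Y)|.
Proof.
move=> C2 fC fY dC dY; set W := verts Y :&: verts (C :\: Y).
rewrite leqNgt; apply/negP => smallW.
have endW g : exists2 x, x \in ends g & x \notin W.
  by apply/subsetPn/negP => /subset_leq_card; rewrite card_ends leqNgt smallW.
have [a af aW] := endW f; have [b bd bW] := endW d.
have dD : d \in C :\: Y by rewrite inE dY dC.
have aY : a \in verts Y := subsetP (ends_sub_verts fY) a af.
have bY : b \notin verts Y.
  by apply: contra bW => bY; rewrite inE bY (subsetP (ends_sub_verts dD)).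
have aC : a \in verts C := subsetP (ends_sub_verts fC) a af.
have bC : b \in verts C := subsetP (ends_sub_verts dC) b bd.
have sWC : W \subset verts C.
  exact: subset_trans (subsetIr _ _) (verts_subset (subsetDl _ _)).
have ab : a != b by apply: contraNneq bY => <-.
have [F [sFC FW conn_ab]] := two_connected_avoid C2 smallW sWC aC bC aW bW ab.
by move: bY; rewrite -(closed_connect (attach_closed sFC FW) conn_ab) aY.
Qed.

End GraphFacts.

Section BaseDegree.
Variables (V E : finType) (src dst : E -> V) (M : matroid E).
Hypothesis src_neq_dst : forall e, src e != dst e.
Local Notation verts := (verts src dst).
Local Notation deg := (deg src dst).
Implicit Types (B C D Y Z : {set E}) (e : E) (v : V).

Definition min_base_deg Y v :=
  \big[minn/#|E|]_(B : {set E} | is_base M Y B) deg B v.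

Definition base_degree_bound Y :=
  \sum_v min_base_deg Y v + #|verts Y| <= 2 * (rank M Y + 1).

Lemma min_base_deg_le Y B v : is_base M Y B -> min_base_deg Y v <= deg B v.
Proof. exact: (Order.TotalTheory.bigmin_le_cond (T := nat)). Qed.

Lemma min_base_deg_attained Y v :
  exists2 B, is_base M Y B & min_base_deg Y v = deg B v.
Proof.
have [B0 bB0] := base_exists M Y.
have [B bB minB] := Order.TotalTheory.eq_bigmin (T := nat) (x := #|E|) _ _
                      (fun B => deg B v) bB0 (fun B _ => max_card _).
by exists B.
Qed.

Lemma min_base_deg_eq0 Y v : v \notin verts Y -> min_base_deg Y v = 0.
Proof.
move=> vY; have [B bB ->] := min_base_deg_attained Y v; apply: deg_eq0.
by apply: contra vY; apply/subsetP/verts_subset; case/is_baseP: bB.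
Qed.

Lemma sum_min_base_deg_verts Y :
  \sum_(v in verts Y) min_base_deg Y v = \sum_v min_base_deg Y v.
Proof.
rewrite [RHS](bigID [in verts Y]) /= [X in _ + X]big1 ?addn0 // => v.
exact: min_base_deg_eq0.
Qed.

Lemma base_degree_bound_set1 e : base_degree_bound [set e].
Proof.
have [B bB] := base_exists M [set e].
have : \sum_v min_base_deg [set e] v <= \sum_v deg B v.
  by apply: leq_sum => v _; apply: min_base_deg_le.
rewrite /base_degree_bound (rank_base bB) /verts big_set1 sum_deg ?card_ends //.
lia.
Qed.

Lemma min_base_deg_extend Y Z D d v :
  d \in D -> (forall B e, is_base M Y B -> e \in D -> is_base M Z (B :|: D :\ e)) ->
  min_base_deg Z v + (v \in verts D) <= min_base_deg Y v + deg D v.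
Proof.
move=> dD ext; have [B bB ->] := min_base_deg_attained Y v.
have step e : e \in D -> min_base_deg Z v + (v \in ends src dst e) <= deg B v + deg D v.
  move=> eD; have := min_base_deg_le v (ext B e bB eD).
  have := deg_setU_le src dst B (D :\ e) v; rewrite (deg_setD1 src dst v eD); lia.
case: (boolP (v \in verts D)) => [/bigcupP [e eD ve]|_].
  by have := step e eD; rewrite ve.
by have := step d dD; rewrite addn0; lia.
Qed.

Lemma base_degree_bound_ear Y C :
  two_connected src dst (verts C) C -> ear M Y C ->
  (forall C', ear M Y C' -> C' \subset Y :|: C -> #|C :\: Y| <= #|C' :\: Y|) ->
  base_degree_bound Y -> base_degree_bound (Y :|: C).
Proof.
move=> C2 /and3P [/circuitP cC meetY /subsetPn [d dC dY]] minC boundY.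
have /set0Pn [f /setIP [fC fY]] : C :&: Y != set0 by rewrite setI_eq0.
set D := C :\: Y; have dD : d \in D by rewrite inE dY dC.
have ext B e : is_base M Y B -> e \in D -> is_base M (Y :|: C) (B :|: D :\ e).
  exact: min_ear_base.
have sum_le : \sum_v min_base_deg (Y :|: C) v + #|verts D|
              <= \sum_v min_base_deg Y v + 2 * #|D|.
  rewrite -sum_mem_card -(sum_deg src_neq_dst) -!big_split /=; apply: leq_sum => v _.
  exact: min_base_deg_extend dD ext.
have vertsYC : verts (Y :|: C) = verts Y :|: verts D.
  by rewrite -bigcup_setU; congr verts; apply/setP => x; rewrite !inE; case: (x \in Y).
have attach := two_connected_attach src_neq_dst C2 fC fY dC dY; rewrite -/D in attach.
have [B bB] := base_exists M Y.
have sBY : B \subset Y by case/is_baseP: bB.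
have rankYC : rank M (Y :|: C) + 1 = rank M Y + #|D|.
  have sDY : D :\ d \subset ~: Y.
    by apply: subset_trans (subsetDl _ _) _; rewrite /D setDE subsetIr.
  rewrite (rank_base (ext B d bB dD)) (rank_base bB) (cardsU_subsetC sBY sDY).
  by rewrite (cardsD1 d D) dD addn1 add1n addnS.
move: boundY; rewrite /base_degree_bound vertsYC.
have := cardsUI (verts Y) (verts D); lia.
Qed.

Lemma base_degree_bound_grow X :
  (forall C, is_circuit M C -> two_connected src dst (verts C) C) ->
  mconnected M X ->
  forall Y, Y \subset X -> Y != set0 -> base_degree_bound Y -> base_degree_bound X.
Proof.
move=> Hcirc HX Y; have [n] := ubnP #|X :\: Y|.
elim: n Y => // n IH Y ltXYn sYX Y0 boundY.
case: (boolP (X \subset Y)) => [sXY|/subsetPn [f fX fY]].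
  by have -> : X = Y by apply/eqP; rewrite eqEsubset sXY sYX.
have [e eY] := set0Pn _ Y0.
have [C /andP [earC sCX] minC] := ear_exists HX sYX eY fX fY.
have [d dC dY] : exists2 d, d \in C & d \notin Y by apply/subsetPn; case/and3P: earC.
apply: (IH (Y :|: C)).
- rewrite -ltnS; apply: (leq_trans _ ltXYn); rewrite ltnS.
  apply/proper_card/properP; split; first by apply/setDS/subsetUl.
  by exists d; rewrite !inE ?dC ?dY ?(subsetP sCX d dC) ?orbT.
- by rewrite subUset sYX sCX.
- by apply: contra Y0; rewrite setU_eq0 => /andP [].
apply: base_degree_bound_ear => //.
  by apply: Hcirc; apply/circuitP; case/and3P: earC.
by move=> C' earC' sC'; apply: minC earC' (subset_trans sC' _); rewrite subUset sYX.
Qed.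

End BaseDegree.

Unset Implicit Arguments. Set Strict Implicit. Set Printing Implicit Defensive.

Theorem lemma5p5 (V E : finType) (src dst : E -> V)
  (Hnoloop : forall e, src e != dst e)
  (M : matroid E)
  (Hcirc : forall C : {set E}, is_circuit M C ->
             two_connected src dst (verts src dst C) C)
  (X : {set E}) (HX : mconnected M X) :
  \sum_(v in verts src dst X)
      \big[minn/#|E|]_(B : {set E} | is_base M X B) deg src dst B v
    + #|verts src dst X| <= 2 * (rank M X + 1).
Proof.
have [X0|[e eX]] := set_0Vmem X.
  by rewrite X0 /verts big_set0 big_set0 cards0.
rewrite (sum_min_base_deg_verts src dst M X).
apply: (base_degree_bound_grow Hnoloop Hcirc HX (Y := [set e])).
- by rewrite sub1set.
- by apply/set0Pn; exists e; rewrite set11.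
- exact: base_degree_bound_set1.
Qed.
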